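(* There is a constant $C>0$ such that for all $\boldsymbol{m}=(m_1,m_2)\in\mathbb{N}^2$ the Lebesgue constant of interpolation in $\Pi_\square$ on the rhodonea nodes satisfies \[\Lambda^{(\boldsymbol{m})}_\square:=\sup_{\mathscr{f}\in C(\mathbb{D}),\ \|\mathscr{f}\|_\infty\le1}\ \sup_{(r,\theta)\in[0,1]\times[-\pi,\pi]}|P_f(r,\theta)|\ \le\ C\ln(m_1+1)\ln(m_2+1),\] where $P_f$ denotes the unique function in $\Pi_\square$ with $P_f(r_{i_1},\theta_{i_2})=\mathscr{f}(r_{i_1},\theta_{i_2})$ for all $\boldsymbol{i}\in\mathrm{I}^{(\boldsymbol{m})}$.
   Context: Polar coordinates $(r,\theta)\in[0,1]\times[-\pi,\pi]$ on the unit disk; $C(\mathbb{D})$ is the set of continuous $\mathscr{f}$ on $[0,1]\times[-\pi,\pi]$ with $\mathscr{f}(r,-\pi)=\mathscr{f}(r,\pi)$ and $\mathscr{f}(0,\theta)$ independent of $\theta$; $\|\mathscr{f}\|_\infty=\sup_{(r,\theta)}|\mathscr{f}(r,\theta)|$. $\mathrm{I}^{(\boldsymbol{m})}=\{(i_1,i_2)\in\mathbb{Z}^2:\ 0\le i_1\le m_1,\ -2m_2<i_2\le 2m_2,\ i_2\le0\text{ if }i_1=m_1,\ i_1+i_2\text{ even}\}$, $r_{i_1}=\cos\!\big(\frac{i_1\pi}{2m_1}\big)$, $\theta_{i_2}=\frac{i_2\pi}{2m_2}$. $\Pi_\square=\mathrm{span}\{X_{\boldsymbol{\gamma}}:\boldsymbol{\gamma}\in\Gamma_\square\}$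 with $X_{\boldsymbol{\gamma}}(r,\theta)=T_{\gamma_1}(r)e^{\mathrm{i}\gamma_2\theta}$, $T_n(r)=\cos(n\arccos r)$, and $\Gamma_\square=\{\boldsymbol{\gamma}\in\mathbb{Z}^2: 0\le\gamma_1\le2m_1,\ -m_2<\gamma_2\le m_2,\ \gamma_1+\gamma_2\text{ even}\}$; the interpolation problem in $\Pi_\square$ on these nodes is uniquely solvable. *)

From Stdlib Require Import Reals ZArith List.
Open Scope R_scope.

Definition chebT (n : nat) (r : R) : R := cos (INR n * acos r).

Definition rnode (m1 i1 : nat) : R := cos (INR i1 * PI / (2 * INR m1)).
Definition thnode (m2 : nat) (i2 : Z) : R := IZR i2 * PI / (2 * INR m2).

Definition in_Im (m1 m2 : nat) (i1 : nat) (i2 : Z) : Prop :=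
  (i1 <= m1)%nat /\
  (- 2 * Z.of_nat m2 < i2 <= 2 * Z.of_nat m2)%Z /\
  (i1 = m1 -> (i2 <= 0)%Z) /\
  Z.even (Z.of_nat i1 + i2) = true.

(* Index set Gamma_square as an explicit finite list:
   0 <= g1 <= 2 m1, -m2 < g2 <= m2, g1 + g2 even. *)
Definition Gamma_sq (m1 m2 : nat) : list (nat * Z) :=
  filter (fun g => Z.even (Z.of_nat (fst g) + snd g))
    (list_prod (seq 0 (2 * m1 + 1))
       (map (fun k => (Z.of_nat k - Z.of_nat m2 + 1)%Z) (seq 0 (2 * m2)))).

Definition sumL {A : Type} (l : list A) (F : A -> R) : R :=
  fold_right (fun x acc => F x + acc) 0 l.

(* An element of Pi_square with complex coefficients c_g = a g + i b g:
   P(r,theta) = sum_{g in Gamma} c_g T_{g1}(r) e^{i g2 theta}.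
   Real and imaginary parts: *)
Definition Psq_re (m1 m2 : nat) (a b : nat -> Z -> R) (r th : R) : R :=
  sumL (Gamma_sq m1 m2) (fun g =>
    chebT (fst g) r *
      (a (fst g) (snd g) * cos (IZR (snd g) * th)
       - b (fst g) (snd g) * sin (IZR (snd g) * th))).

Definition Psq_im (m1 m2 : nat) (a b : nat -> Z -> R) (r th : R) : R :=
  sumL (Gamma_sq m1 m2) (fun g =>
    chebT (fst g) r *
      (a (fst g) (snd g) * sin (IZR (snd g) * th)
       + b (fst g) (snd g) * cos (IZR (snd g) * th))).

Definition in_dom (r th : R) : Prop := 0 <= r <= 1 /\ - PI <= th <= PI.

Definition cont_rect (f : R -> R -> R) : Prop :=
  forall r th, in_dom r th -> forall eps, 0 < eps ->
    exists delta, 0 < delta /\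
      forall r' th', in_dom r' th' -> Rabs (r - r') < delta ->
        Rabs (th - th') < delta -> Rabs (f r th - f r' th') < eps.

Definition in_CD (f : R -> R -> R) : Prop :=
  cont_rect f /\
  (forall r, 0 <= r <= 1 -> f r (- PI) = f r PI) /\
  (forall th th', - PI <= th <= PI -> - PI <= th' <= PI -> f 0 th = f 0 th').

Definition cmod (x y : R) : R := sqrt (x * x + y * y).

From Stdlib Require Import Reals Lra Lia ZArith List.
From Coquelicot Require Import Coquelicot.
Open Scope R_scope.

(* Substituting r = cos t, an element of Pi_square becomes
   Q(t, theta) = sum_{g in Gamma_sq} c_g cos (g1 t) e^{i g2 theta}, and the rhodonea
   nodes become a grid: radial angles t_i = i pi / (2 m1), i <= m1, and in row i the
   angles theta of the parity of i (only the nonpositive ones in the last row).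

   1. For each node we build an explicit fundamental function (node_kernel): a product
      of a radial reproducing kernel (discrete orthogonality of cos (g t) for the
      trapezoidal rule on the t_i) and an angular Dirichlet kernel (discrete
      orthogonality of e^{i d theta} on a row), split by the parity of g1 = g2 mod 2.
      It reproduces every basis function, hence Q = sum_nodes Q(node) node_kernel.
   2. Since |Q(node)| = |f(node)| <= 1, |Q| is bounded by the Lebesgue function
      sum_nodes |node_kernel|, which factors into a radial and an angular sum.
   3. Every one-dimensional kernel is bounded by min(n, 1/|sin x|); its sum over n
      equispaced points is at most n (8 + 4 ln n) by comparison with harmonic sums.
   Multiplying the two one-dimensional estimates gives C = 3840. *)

Fixpoint rsum (n : nat) (f : nat -> R) : R :=
  match n with O => 0 | S k => rsum k f + f k end.
Fixpoint csum (n : nat) (f : nat -> C) : C :=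
  match n with O => RtoC 0 | S k => Cplus (csum k f) (f k) end.

Lemma rsum_S n f : rsum (S n) f = rsum n f + f n.
Proof. reflexivity. Qed.

Lemma rsum_ext n f g : (forall k, (k < n)%nat -> f k = g k) -> rsum n f = rsum n g.
Proof. induction n; simpl; intros H; auto. rewrite IHn by (intros; apply H; lia). rewrite H by lia; auto. Qed.

Lemma rsum_le n f g : (forall k, (k < n)%nat -> f k <= g k) -> rsum n f <= rsum n g.
Proof.
  induction n; simpl; intros H; [lra|].
  assert (rsum n f <= rsum n g) by (apply IHn; intros; apply H; lia).
  specialize (H n ltac:(lia)). lra.
Qed.

Lemma rsum_plus n f g : rsum n (fun k => f k + g k) = rsum n f + rsum n g.
Proof. induction n; simpl; [lra|]. rewrite IHn; lra. Qed.

Lemma rsum_scal n c f : rsum n (fun k => c * f k) = c * rsum n f.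
Proof. induction n; simpl; [lra|]. rewrite IHn; lra. Qed.

Lemma rsum_const n c : rsum n (fun _ => c) = INR n * c.
Proof. induction n; simpl rsum; [simpl; lra|]. rewrite IHn, S_INR; lra. Qed.

Lemma rsum_zero n f : (forall k, (k < n)%nat -> f k = 0) -> rsum n f = 0.
Proof. intros H. rewrite (rsum_ext n f (fun _ => 0)), rsum_const by auto. lra. Qed.

Lemma rsum_nonneg n f : (forall k, (k < n)%nat -> 0 <= f k) -> 0 <= rsum n f.
Proof. intros H. rewrite <- (rsum_zero n (fun _ => 0)) by auto. apply rsum_le; auto. Qed.

Lemma rsum_shift n f : rsum (S n) f = f O + rsum n (fun k => f (S k)).
Proof. induction n; simpl in *; [lra|]. rewrite IHn. lra. Qed.

Lemma rsum_add n m f : rsum (n + m) f = rsum n f + rsum m (fun k => f (n + k)%nat).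
Proof.
  induction m; simpl; [rewrite Nat.add_0_r; lra|].
  rewrite Nat.add_succ_r. simpl. rewrite IHm. lra.
Qed.

Lemma rsum_rev n f : rsum n (fun k => f (n - 1 - k)%nat) = rsum n f.
Proof.
  induction n; auto.
  rewrite rsum_shift, (rsum_ext n _ (fun k => f (n - 1 - k)%nat)) by (intros; f_equal; lia).
  rewrite IHn. simpl. replace (n - 0 - 0)%nat with n by lia. lra.
Qed.

Lemma rsum_mono n m f :
  (n <= m)%nat -> (forall k, (k < m)%nat -> 0 <= f k) -> rsum n f <= rsum m f.
Proof.
  intros Hnm H. replace m with (n + (m - n))%nat by lia. rewrite rsum_add.
  assert (0 <= rsum (m - n) (fun k => f (n + k)%nat)) by (apply rsum_nonneg; intros; apply H; lia).
  lra.
Qed.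

Lemma rsum_swap n m (f : nat -> nat -> R) :
  rsum n (fun i => rsum m (fun j => f i j)) = rsum m (fun j => rsum n (fun i => f i j)).
Proof. induction n; simpl; [rewrite rsum_zero; auto|]. rewrite IHn, <- rsum_plus. auto. Qed.

Lemma rsum_single n f k0 :
  (k0 < n)%nat -> (forall k, (k < n)%nat -> k <> k0 -> f k = 0) -> rsum n f = f k0.
Proof.
  induction n; intros H1 H2; [lia|]. simpl. destruct (Nat.eq_dec k0 n) as [->|Hne].
  - rewrite rsum_zero; [lra|]. intros; apply H2; lia.
  - rewrite IHn by (try lia; intros; apply H2; lia). rewrite (H2 n) by lia. lra.
Qed.

Open Scope C_scope.

Lemma csum_ext n f g : (forall k, (k < n)%nat -> f k = g k) -> csum n f = csum n g.
Proof. induction n; simpl; intros H; auto. rewrite IHn by (intros; apply H; lia). rewrite H by lia; auto. Qed.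

Lemma csum_plus n f g : csum n (fun k => f k + g k) = csum n f + csum n g.
Proof. induction n; simpl; [ring|]. rewrite IHn; ring. Qed.

Lemma csum_scal n c f : csum n (fun k => c * f k) = c * csum n f.
Proof. induction n; simpl; [ring|]. rewrite IHn; ring. Qed.

Lemma csum_scal_r n c f : csum n (fun k => f k * c) = csum n f * c.
Proof. induction n; simpl; [ring|]. rewrite IHn; ring. Qed.

Lemma csum_zero n (f : nat -> C) : (forall k, (k < n)%nat -> f k = 0) -> csum n f = 0.
Proof. induction n; simpl; intros H; auto. rewrite IHn by (intros; apply H; lia). rewrite H by lia; ring. Qed.

Lemma csum_swap n m (f : nat -> nat -> C) :
  csum n (fun i => csum m (fun j => f i j)) = csum m (fun j => csum n (fun i => f i j)).
Proof. induction n; simpl; [rewrite csum_zero; auto|]. rewrite IHn, <- csum_plus. auto. Qed.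

Lemma csum_single n (f : nat -> C) k0 :
  (k0 < n)%nat -> (forall k, (k < n)%nat -> k <> k0 -> f k = 0) -> csum n f = f k0.
Proof.
  induction n; intros H1 H2; [lia|]. simpl. destruct (Nat.eq_dec k0 n) as [->|Hne].
  - rewrite csum_zero; [ring|]. intros; apply H2; lia.
  - rewrite IHn by (try lia; intros; apply H2; lia). rewrite (H2 n) by lia. ring.
Qed.

Lemma csum_RtoC n f : csum n (fun k => RtoC (f k)) = RtoC (rsum n f).
Proof. induction n; simpl; auto. rewrite IHn. unfold RtoC, Cplus; simpl. f_equal; lra. Qed.

Lemma csum_fst n f : fst (csum n f) = rsum n (fun k => fst (f k)).
Proof. induction n; simpl; auto. rewrite <- IHn. auto. Qed.

Lemma csum_snd n f : snd (csum n f) = rsum n (fun k => snd (f k)).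
Proof. induction n; simpl; auto. rewrite <- IHn. auto. Qed.

Lemma Cmod_csum n f : (Cmod (csum n f) <= rsum n (fun k => Cmod (f k)))%R.
Proof. induction n; simpl; [rewrite Cmod_0; lra|]. eapply Rle_trans; [apply Cmod_triangle|lra]. Qed.

Definition csumL {A} (l : list A) (f : A -> C) : C :=
  fold_right (fun x acc => f x + acc) (RtoC 0) l.

Lemma csumL_ext {A} (l : list A) f g : (forall x, In x l -> f x = g x) -> csumL l f = csumL l g.
Proof. induction l; simpl; intros H; auto. rewrite H, IHl by auto; auto. Qed.

Lemma csumL_swap {A} (l : list A) n (F : A -> nat -> C) :
  csumL l (fun x => csum n (fun i => F x i)) = csum n (fun i => csumL l (fun x => F x i)).
Proof. induction l; simpl; [rewrite csum_zero; auto|]. rewrite IHl, <- csum_plus; auto. Qed.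

Lemma csumL_scal_r {A} (l : list A) f c : csumL l (fun x => f x * c) = csumL l f * c.
Proof. induction l; simpl; [ring|]. rewrite IHl; ring. Qed.

Definition cis (x : R) : C := (cos x, sin x).

Lemma cis_add x y : cis (x + y) = cis x * cis y.
Proof. unfold cis, Cmult; simpl. rewrite cos_plus, sin_plus. f_equal; ring. Qed.

Lemma Cmod_cis x : Cmod (cis x) = 1%R.
Proof.
  unfold Cmod, cis; simpl. pose proof (sin2_cos2 x). unfold Rsqr in *.
  replace (cos x * (cos x * 1) + sin x * (sin x * 1))%R with 1%R by lra. apply sqrt_1.
Qed.
Open Scope R_scope.

(* Trigonometric progressions.  Multiplying sum_{j<L} cos(a + 2 j p) (resp. sin) by
   2 sin p telescopes; this yields both the closed forms and the bound
   |sum_{j<L} e^{i(a + 2 j p)}| * |sin p| <= 1. *)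
Lemma sin_mul_cos_progression a p L :
  2 * sin p * rsum L (fun j => cos (a + 2 * INR j * p)) =
  sin (a + (2 * INR L - 1) * p) - sin (a - p).
Proof.
  induction L; simpl rsum.
  - simpl INR. replace (a + (2 * 0 - 1) * p) with (a - p) by ring. ring.
  - rewrite Rmult_plus_distr_l, IHL, S_INR.
    replace (a + (2 * (INR L + 1) - 1) * p) with ((a + 2 * INR L * p) + p) by ring.
    replace (a + (2 * INR L - 1) * p) with ((a + 2 * INR L * p) - p) by ring.
    rewrite sin_plus, (sin_minus (a + 2 * INR L * p) p). ring.
Qed.

Lemma sin_mul_sin_progression a p L :
  2 * sin p * rsum L (fun j => sin (a + 2 * INR j * p)) =
  cos (a - p) - cos (a + (2 * INR L - 1) * p).
Proof.
  induction L; simpl rsum.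
  - simpl INR. replace (a + (2 * 0 - 1) * p) with (a - p) by ring. ring.
  - rewrite Rmult_plus_distr_l, IHL, S_INR.
    replace (a + (2 * (INR L + 1) - 1) * p) with ((a + 2 * INR L * p) + p) by ring.
    replace (a + (2 * INR L - 1) * p) with ((a + 2 * INR L * p) - p) by ring.
    rewrite cos_plus, (cos_minus (a + 2 * INR L * p) p). ring.
Qed.

Lemma cis_progression_sin_bound a p L :
  Cmod (csum L (fun j => cis (a + 2 * INR j * p))) * Rabs (sin p) <= 1.
Proof.
  pose proof (csum_fst L (fun j => cis (a + 2 * INR j * p))) as Hfst.
  pose proof (csum_snd L (fun j => cis (a + 2 * INR j * p))) as Hsnd.
  destruct (csum L (fun j => cis (a + 2 * INR j * p))) as [X Y]. simpl in Hfst, Hsnd.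
  assert (HX : 2 * sin p * X = sin (a + (2 * INR L - 1) * p) - sin (a - p)).
  { rewrite <- sin_mul_cos_progression, Hfst. auto. }
  assert (HY : 2 * sin p * Y = cos (a - p) - cos (a + (2 * INR L - 1) * p)).
  { rewrite <- sin_mul_sin_progression, Hsnd. auto. }
  assert (Hsq : (Cmod (X, Y) * Rabs (sin p)) * (Cmod (X, Y) * Rabs (sin p))
                = (X * X + Y * Y) * (sin p * sin p)).
  { assert (Hm : Cmod (X, Y) * Cmod (X, Y) = X * X + Y * Y).
    { unfold Cmod; simpl. rewrite sqrt_sqrt by nra. ring. }
    pose proof (Rsqr_abs (sin p)) as Ha. unfold Rsqr in Ha.
    transitivity ((Cmod (X, Y) * Cmod (X, Y)) * (Rabs (sin p) * Rabs (sin p))); [ring|].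
    rewrite Hm, <- Ha. ring. }
  assert (Hbd : (2 * sin p * X) * (2 * sin p * X) + (2 * sin p * Y) * (2 * sin p * Y) <= 4).
  { rewrite HX, HY.
    pose proof (sin2_cos2 (a + (2 * INR L - 1) * p)). pose proof (sin2_cos2 (a - p)).
    pose proof (Rle_0_sqr (sin (a + (2 * INR L - 1) * p) + sin (a - p))).
    pose proof (Rle_0_sqr (cos (a + (2 * INR L - 1) * p) + cos (a - p))).
    unfold Rsqr in *. nra. }
  pose proof (Cmod_ge_0 (X, Y)). pose proof (Rabs_pos (sin p)). nra.
Qed.

Lemma cos_progression_sin_bound a p L :
  Rabs (rsum L (fun j => cos (a + 2 * INR j * p))) * Rabs (sin p) <= 1.
Proof.
  rewrite <- Rabs_mult. pose proof (sin_mul_cos_progression a p L).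
  pose proof (SIN_bound (a + (2 * INR L - 1) * p)). pose proof (SIN_bound (a - p)).
  apply Rabs_le. split; nra.
Qed.

Lemma cis_progression_count a p L : Cmod (csum L (fun j => cis (a + 2 * INR j * p))) <= INR L.
Proof.
  eapply Rle_trans; [apply Cmod_csum|].
  rewrite (rsum_ext _ _ (fun _ => 1)), rsum_const by (intros; apply Cmod_cis). lra.
Qed.

Lemma cos_progression_count a p L : Rabs (rsum L (fun j => cos (a + 2 * INR j * p))) <= INR L.
Proof.
  induction L; simpl rsum; [rewrite Rabs_R0; simpl; lra|]. rewrite S_INR.
  eapply Rle_trans; [apply Rabs_triang|].
  pose proof (COS_bound (a + 2 * INR L * p)) as Hc. apply Rabs_le in Hc. lra.
Qed.

Lemma cis_progression_vanish a p L :
  sin p <> 0 -> cos (2 * INR L * p) = 1 -> sin (2 * INR L * p) = 0 ->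
  csum L (fun j => cis (a + 2 * INR j * p)) = RtoC 0.
Proof.
  intros H0 H1 H2.
  assert (E : a + (2 * INR L - 1) * p = (a - p) + 2 * INR L * p) by ring.
  apply injective_projections; simpl.
  - rewrite csum_fst; cbn [fst cis]. apply (Rmult_eq_reg_l (2 * sin p)); [|lra].
    rewrite sin_mul_cos_progression, E, sin_plus, H1, H2. ring.
  - rewrite csum_snd; cbn [snd cis]. apply (Rmult_eq_reg_l (2 * sin p)); [|lra].
    rewrite sin_mul_sin_progression, E, cos_plus, H1, H2. ring.
Qed.

(* The envelope min(n, 1/|sin x|) of a Dirichlet-type kernel of order n.  All
   one-dimensional kernels below are bounded by it, and its sum over n
   equispaced points of a period is O(n ln n). *)
Definition env (n : nat) (x : R) : R :=
  if Req_EM_T (sin x) 0 then INR n else Rmin (INR n) (/ Rabs (sin x)).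

Lemma env_nonneg n x : 0 <= env n x.
Proof.
  unfold env. pose proof (pos_INR n). destruct Req_EM_T; auto.
  apply Rmin_glb; auto. left; apply Rinv_0_lt_compat, Rabs_pos_lt; auto.
Qed.

Lemma env_le_n n x : env n x <= INR n.
Proof. unfold env. destruct Req_EM_T; [lra|apply Rmin_l]. Qed.

Lemma env_le_inv_sin n x : sin x <> 0 -> env n x <= / Rabs (sin x).
Proof. unfold env. destruct Req_EM_T; [tauto|intros; apply Rmin_r]. Qed.

Lemma env_ge n x K : K <= INR n -> (sin x <> 0 -> K * Rabs (sin x) <= 1) -> K <= env n x.
Proof.
  intros H1 H2. unfold env. destruct Req_EM_T as [|Hs]; auto. apply Rmin_glb; auto.
  specialize (H2 Hs). pose proof (Rabs_pos_lt _ Hs).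
  apply (Rmult_le_reg_r (Rabs (sin x))); auto. rewrite Rinv_l; lra.
Qed.

Lemma env_shift_PI n x : env n (x + PI) = env n x.
Proof.
  unfold env. rewrite neg_sin, Rabs_Ropp.
  destruct (Req_EM_T (- sin x) 0), (Req_EM_T (sin x) 0); auto; lra.
Qed.

Lemma env_opp n x : env n (- x) = env n x.
Proof.
  unfold env. rewrite sin_neg, Rabs_Ropp.
  destruct (Req_EM_T (- sin x) 0), (Req_EM_T (sin x) 0); auto; lra.
Qed.

Lemma env_PI_minus n x : env n (PI - x) = env n x.
Proof. replace (PI - x) with (- x + PI) by ring. rewrite env_shift_PI. apply env_opp. Qed.

Lemma sin_ge_quarter y : 0 <= y <= PI / 2 -> y / 4 <= sin y.
Proof.
  intros [H1 H2]. pose proof PI_4. pose proof PI2_Rlt_PI.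
  destruct (SIN y H1 ltac:(lra)) as [Hs _]. eapply Rle_trans; [|apply Hs].
  unfold sin_lb, sin_approx, sin_term. simpl.
  match goal with |- _ <= ?r =>
    replace r with (y - y^3/6 + y^5/120 - y^7/5040) by (simpl; field) end.
  assert (Hy : 0 <= y ^ 2 <= 4) by nra.
  assert (E : y - y^3/6 + y^5/120 - y^7/5040 - y/4
              = y * (3/4 - y^2/6 + (y^2)^2/120 - (y^2)^3/5040)) by field.
  assert (0 <= 3/4 - y^2/6 + (y^2)^2/120 - (y^2)^3/5040) by (set (u := y ^ 2) in *; nra).
  nra.
Qed.

Lemma ln_ge_1_minus_inv y : 0 < y -> 1 - / y <= ln y.
Proof. intros Hy. pose proof (exp_ineq1_le (- ln y)). rewrite exp_Ropp, exp_ln in H by auto. lra. Qed.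

Definition harm (j : nat) : R := if Nat.eqb j 0 then 1 else / INR j.

Lemma harm_nonneg j : 0 <= harm j.
Proof. unfold harm. destruct (Nat.eqb_spec j 0); [lra|]. left; apply Rinv_0_lt_compat, lt_0_INR; lia. Qed.

Lemma harm_sum_le_aux n : rsum (n + 2) harm <= 2 + ln (INR n + 1).
Proof.
  induction n.
  - simpl. unfold harm; simpl. rewrite Rplus_0_l, ln_1. lra.
  - replace (S n + 2)%nat with (S (n + 2)) by lia. simpl rsum.
    unfold harm at 2. destruct (Nat.eqb_spec (n + 2) 0); [lia|].
    rewrite S_INR, plus_INR. simpl INR. pose proof (pos_INR n).
    pose proof (ln_ge_1_minus_inv ((INR n + 1 + 1) / (INR n + 1))
                  ltac:(apply Rdiv_lt_0_compat; lra)) as Hl.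
    rewrite ln_div in Hl by lra.
    replace (1 - / ((INR n + 1 + 1) / (INR n + 1))) with (/ (INR n + (1 + 1))) in Hl
      by (field; lra).
    lra.
Qed.

Lemma harm_sum_le n : (1 <= n)%nat -> rsum n harm <= 2 + ln (INR n).
Proof.
  intros H. destruct n as [|[|n]]; [lia| simpl; unfold harm; simpl; rewrite ln_1; lra|].
  replace (S (S n)) with (n + 2)%nat by lia. eapply Rle_trans; [apply harm_sum_le_aux|].
  rewrite plus_INR. simpl. pose proof (pos_INR n).
  apply Rplus_le_compat_l, Rlt_le, ln_increasing; lra.
Qed.

Definition env_sum (n : nat) (a : R) : R := rsum n (fun j => env n (a + INR j * PI / INR n)).

Lemma env_sum_shift n a : (1 <= n)%nat -> env_sum n (a + PI / INR n) = env_sum n a.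
Proof.
  intros Hn. unfold env_sum. destruct n as [|n]; [lia|].
  assert (HP : 0 < INR (S n)) by (apply lt_0_INR; lia).
  rewrite (rsum_shift n (fun j => env (S n) (a + INR j * PI / INR (S n)))). rewrite rsum_S.
  replace (a + PI / INR (S n) + INR n * PI / INR (S n)) with (a + PI)
    by (rewrite S_INR in *; field; lra).
  rewrite env_shift_PI. replace (a + INR 0 * PI / INR (S n)) with a by (change (INR 0) with 0; field; lra).
  rewrite (rsum_ext n (fun j => env (S n) (a + PI / INR (S n) + INR j * PI / INR (S n)))
                      (fun k => env (S n) (a + INR (S k) * PI / INR (S n)))).
  - lra.
  - intros k _. f_equal. rewrite (S_INR k). field. lra.
Qed.

Lemma env_sum_shiftZ n a z : (1 <= n)%nat -> env_sum n (a + IZR z * PI / INR n) = env_sum n a.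
Proof.
  intros Hn. assert (HP : 0 < INR n) by (apply lt_0_INR; lia).
  assert (Hnat : forall a k, env_sum n (a + INR k * PI / INR n) = env_sum n a).
  { intros b k. induction k.
    - f_equal. change (INR 0) with 0. field; lra.
    - rewrite <- IHk, <- (env_sum_shift n (b + INR k * PI / INR n)) by auto.
      f_equal. rewrite (S_INR k); field; lra. }
  destruct (Z_le_gt_dec 0 z).
  - rewrite <- (Z2Nat.id z), <- INR_IZR_INZ by lia. apply Hnat.
  - rewrite <- (Hnat (a + IZR z * PI / INR n) (Z.to_nat (- z))). f_equal.
    rewrite (INR_IZR_INZ (Z.to_nat (- z))), Z2Nat.id, opp_IZR by lia. field; lra.
Qed.

Lemma env_le_harm n j x :
  (1 <= n)%nat -> (1 <= j)%nat -> INR j * PI / INR n <= x <= PI / 2 ->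
  env n x <= 2 * INR n * harm j.
Proof.
  intros Hn Hj Hx. assert (HP : 0 < INR n) by (apply lt_0_INR; lia).
  assert (HJ : 1 <= INR j) by (apply (le_INR 1); lia). pose proof PI2_3_2.
  assert (Hx0 : 0 <= INR j * PI / INR n) by (apply Rmult_le_pos; [nra|]; left; apply Rinv_0_lt_compat; lra).
  assert (Hs : INR j / (2 * INR n) <= sin x).
  { eapply Rle_trans; [|apply sin_ge_quarter; lra].
    assert (E : INR j * PI / INR n / 4 - INR j / (2 * INR n) = INR j / INR n * (PI / 4 - 1 / 2))
      by (field; lra).
    assert (0 <= INR j / INR n) by (apply Rmult_le_pos; [lra|left; apply Rinv_0_lt_compat; lra]).
    nra. }
  assert (Hpos : 0 < INR j / (2 * INR n)) by (apply Rdiv_lt_0_compat; lra).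
  eapply Rle_trans; [apply env_le_inv_sin; lra|]. rewrite Rabs_right by lra.
  unfold harm. destruct (Nat.eqb_spec j 0); [lia|].
  replace (2 * INR n * / INR j) with (/ (INR j / (2 * INR n))) by (field; lra).
  apply Rinv_le_contravar; lra.
Qed.

(* On the j-th cell [j pi/n, (j+1) pi/n] of [0, pi] the envelope is controlled by the
   distance j (or n-1-j) to the nearest zero of sin. *)
Lemma env_on_cell n j x :
  (1 <= n)%nat -> (j < n)%nat -> INR j * PI / INR n <= x < (INR j + 1) * PI / INR n ->
  env n x <= 2 * INR n * (harm j + harm (n - 1 - j)).
Proof.
  intros Hn Hj [Hx1 Hx2]. assert (HP : 0 < INR n) by (apply lt_0_INR; lia).
  pose proof (harm_nonneg j). pose proof (harm_nonneg (n - 1 - j)). pose proof (env_le_n n x).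
  assert (Hjn : INR j + 1 <= INR n) by (rewrite <- S_INR; apply le_INR; lia).
  assert (Hx3 : x < PI).
  { apply (Rlt_le_trans _ _ _ Hx2), Rle_trans with (INR n * PI / INR n); [|right; field; lra].
    unfold Rdiv. apply Rmult_le_compat_r; [left; apply Rinv_0_lt_compat; lra|].
    pose proof PI_RGT_0. nra. }
  destruct (Rle_lt_dec x (PI / 2)) as [Hle|Hgt].
  - destruct (Nat.eq_dec j 0) as [->|Hj0].
    + change (harm 0) with 1. pose proof (harm_nonneg (n - 1 - 0)). nra.
    + pose proof (env_le_harm n j x Hn ltac:(lia) (conj Hx1 Hle)). nra.
  - rewrite <- env_PI_minus. destruct (Nat.eq_dec j (n - 1)) as [->|Hj0].
    + replace (n - 1 - (n - 1))%nat with 0%nat by lia. change (harm 0) with 1.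
      pose proof (env_le_n n (PI - x)). nra.
    + assert (HJ' : INR (n - 1 - j) = INR n - 1 - INR j) by (rewrite !minus_INR by lia; simpl; lra).
      assert (Hy : INR (n - 1 - j) * PI / INR n <= PI - x).
      { rewrite HJ'. unfold Rdiv in *. apply (Rmult_le_reg_r (INR n)); auto.
        apply (Rmult_lt_compat_r (INR n)) in Hx2; auto.
        rewrite Rmult_assoc, Rinv_l in * by lra. nra. }
      pose proof (env_le_harm n (n - 1 - j) (PI - x) Hn ltac:(lia) ltac:(lra)). nra.
Qed.

Lemma env_sum_le n a : (1 <= n)%nat -> env_sum n a <= INR n * (8 + 4 * ln (INR n)).
Proof.
  intros Hn. assert (HP : 0 < INR n) by (apply lt_0_INR; lia). pose proof PI_RGT_0.
  (* Shift a by a multiple of pi/n into the first cell [0, pi/n). *)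
  set (u := a * INR n / PI). set (z := (1 - up u)%Z).
  rewrite <- (env_sum_shiftZ n a z) by auto.
  destruct (archimed u) as [Hu1 Hu2].
  assert (Ea : a + IZR z * PI / INR n = (u + 1 - IZR (up u)) * PI / INR n)
    by (unfold z, u; rewrite minus_IZR; field; lra).
  assert (Ha : 0 <= a + IZR z * PI / INR n < PI / INR n).
  { rewrite Ea. unfold Rdiv. split.
    - apply Rmult_le_pos; [apply Rmult_le_pos; lra|]. left; apply Rinv_0_lt_compat; lra.
    - apply Rmult_lt_compat_r; [apply Rinv_0_lt_compat; lra|nra]. }
  unfold env_sum. eapply Rle_trans.
  { apply rsum_le. intros j Hj. apply (env_on_cell n j); auto.
    unfold Rdiv in *. rewrite !Rmult_plus_distr_r. lra. }
  rewrite rsum_scal, rsum_plus, (rsum_rev n harm). pose proof (harm_sum_le n Hn). nra.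
Qed.

Lemma env_sum_two_periods n a : (1 <= n)%nat ->
  rsum (2 * n) (fun j => env n (a + INR j * PI / INR n)) <= 2 * (INR n * (8 + 4 * ln (INR n))).
Proof.
  intros Hn. assert (0 < INR n) by (apply lt_0_INR; lia).
  replace (2 * n)%nat with (n + n)%nat by lia. rewrite rsum_add.
  rewrite (rsum_ext n (fun k => env n (a + INR (n + k) * PI / INR n))
                      (fun k => env n (a + INR k * PI / INR n))).
  - pose proof (env_sum_le n a Hn). unfold env_sum in *. lra.
  - intros k _. rewrite <- (env_shift_PI n (a + INR k * PI / INR n)). f_equal. rewrite plus_INR. field. lra.
Qed.

(* Row i1 of the grid consists of the angles
   theta_{i1,j} = (2 j + q(i1)) pi / (2N), j < L(i1), with q(i1) = 2 - (i1 mod 2) - 2N;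
   for i1 < M all 2N angles of the right parity occur, for i1 = M only the N
   nonpositive ones (the constraint i2 <= 0 in I^(m)). *)
Definition row_offset (N i1 : nat) : Z := (2 - Z.of_nat (i1 mod 2) - 2 * Z.of_nat N)%Z.
Definition row_index (N i1 j : nat) : Z := (2 * Z.of_nat j + row_offset N i1)%Z.
Definition row_angle (N i1 j : nat) : R := IZR (row_index N i1 j) * PI / (2 * INR N).
Definition row_len (M N i1 : nat) : nat := if Nat.eqb i1 M then N else (2 * N)%nat.

Lemma cos_2kPI k : cos (2 * (IZR k * PI)) = 1.
Proof. rewrite cos_2a_sin, sin_eq_0_1 by eauto. ring. Qed.

Lemma sin_2kPI k : sin (2 * (IZR k * PI)) = 0.
Proof. apply sin_eq_0_1. exists (2 * k)%Z. rewrite mult_IZR. ring. Qed.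

Lemma sin_frac_PI_neq0 N d :
  (1 <= N)%nat -> d <> 0%Z -> (Z.abs d < 2 * Z.of_nat N)%Z -> sin (IZR d * PI / (2 * INR N)) <> 0.
Proof.
  intros HN Hd Hb Hs. apply sin_eq_0_0 in Hs. destruct Hs as [k Hk].
  assert (HP : 0 < INR N) by (apply lt_0_INR; lia). pose proof PI_RGT_0.
  assert (E : IZR d = IZR k * (2 * INR N)).
  { replace (IZR d) with ((IZR d * PI / (2 * INR N)) * (2 * INR N) / PI) by (field; lra).
    rewrite Hk. field. lra. }
  rewrite INR_IZR_INZ, <- !mult_IZR in E. apply eq_IZR in E. subst d.
  rewrite Z.abs_mul, (Z.abs_eq (2 * Z.of_nat N)) in Hb by lia.
  destruct (Z.eq_dec k 0); [subst; lia|]. nia.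
Qed.

Lemma row_angle_split N i1 j d :
  IZR d * row_angle N i1 j =
  IZR d * IZR (row_offset N i1) * PI / (2 * INR N) + 2 * INR j * (IZR d * PI / (2 * INR N)).
Proof. unfold row_angle, row_index. rewrite plus_IZR, mult_IZR, <- INR_IZR_INZ. unfold Rdiv. ring. Qed.

Open Scope C_scope.

Lemma row_sum_freq0 M N i1 :
  csum (row_len M N i1) (fun j => cis (IZR 0 * row_angle N i1 j)) = RtoC (INR (row_len M N i1)).
Proof.
  rewrite (csum_ext _ _ (fun _ => RtoC 1)), csum_RtoC, rsum_const.
  - f_equal. ring.
  - intros; unfold cis. rewrite Rmult_0_l, cos_0, sin_0. auto.
Qed.

Lemma row_sum_vanish M N i1 d :
  (1 <= N)%nat -> d <> 0%Z -> (Z.abs d < 2 * Z.of_nat N)%Z -> (i1 = M -> Z.Even d) ->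
  csum (row_len M N i1) (fun j => cis (IZR d * row_angle N i1 j)) = RtoC 0.
Proof.
  intros HN Hd Hb He. assert (HP : (0 < INR N)%R) by (apply lt_0_INR; lia).
  rewrite (csum_ext _ _ (fun j => cis (IZR d * IZR (row_offset N i1) * PI / (2 * INR N)
                                        + 2 * INR j * (IZR d * PI / (2 * INR N)))))
    by (intros; rewrite row_angle_split; auto).
  (* The length times the step is a multiple of 2 pi. *)
  assert (Hper : exists k, (2 * INR (row_len M N i1) * (IZR d * PI / (2 * INR N)) = 2 * (IZR k * PI))%R).
  { unfold row_len. destruct (Nat.eqb_spec i1 M).
    - destruct (He e) as [m ->]. exists m. rewrite mult_IZR. field. lra.
    - exists d. rewrite mult_INR. simpl INR. field. lra. }
  destruct Hper as [k Hk].
  apply cis_progression_vanish; [apply sin_frac_PI_neq0; auto| rewrite Hk; apply cos_2kPI| rewrite Hk; apply sin_2kPI].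
Qed.

Definition ang_kernel (N : nat) (c0 : Z) (p : R) : C :=
  csum N (fun k => cis (IZR c0 * p + 2 * INR k * p)).

Lemma row_convolution_swap M N i1 c0 g2 th :
  csum (row_len M N i1) (fun j => cis (IZR g2 * row_angle N i1 j) * ang_kernel N c0 (th - row_angle N i1 j)) =
  csum N (fun k => cis ((IZR c0 + 2 * INR k) * th) *
     csum (row_len M N i1) (fun j => cis (IZR (g2 - c0 - 2 * Z.of_nat k) * row_angle N i1 j))).
Proof.
  unfold ang_kernel.
  rewrite (csum_ext _ _ (fun j => csum N (fun k => cis (IZR g2 * row_angle N i1 j) *
             cis (IZR c0 * (th - row_angle N i1 j) + 2 * INR k * (th - row_angle N i1 j)))))
    by (intros; rewrite csum_scal; auto).
  rewrite csum_swap. apply csum_ext. intros k _. rewrite <- csum_scal. apply csum_ext. intros j _.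
  rewrite <- !cis_add. f_equal. rewrite !minus_IZR, mult_IZR, <- INR_IZR_INZ. ring.
Qed.

Lemma row_convolution_match M N i1 c0 g2 th :
  (1 <= N)%nat -> (- Z.of_nat N < c0 <= 2 - Z.of_nat N)%Z ->
  (- Z.of_nat N < g2 <= Z.of_nat N)%Z -> Z.Even (g2 - c0) ->
  csum (row_len M N i1) (fun j => cis (IZR g2 * row_angle N i1 j) * ang_kernel N c0 (th - row_angle N i1 j)) =
  RtoC (INR (row_len M N i1)) * cis (IZR g2 * th).
Proof.
  intros HN Hc Hg [m Hm]. rewrite row_convolution_swap.
  rewrite (csum_single N _ (Z.to_nat m)) by
    (lia || (intros k Hk Hne; rewrite row_sum_vanish; [ring|lia|lia|lia|];
             intros _; exists (m - Z.of_nat k)%Z; lia)).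
  replace (g2 - c0 - 2 * Z.of_nat (Z.to_nat m))%Z with 0%Z by lia. rewrite row_sum_freq0.
  replace ((IZR c0 + 2 * INR (Z.to_nat m)) * th)%R with (IZR g2 * th)%R; [ring|].
  rewrite INR_IZR_INZ, Z2Nat.id by lia. replace g2 with (c0 + 2 * m)%Z by lia.
  rewrite plus_IZR, mult_IZR. ring.
Qed.

Lemma row_convolution_mismatch M N i1 c0 g2 th :
  (1 <= N)%nat -> (- Z.of_nat N < c0 <= 2 - Z.of_nat N)%Z ->
  (- Z.of_nat N < g2 <= Z.of_nat N)%Z -> ~ Z.Even (g2 - c0) -> i1 <> M ->
  csum (row_len M N i1) (fun j => cis (IZR g2 * row_angle N i1 j) * ang_kernel N c0 (th - row_angle N i1 j)) =
  RtoC 0.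
Proof.
  intros HN Hc Hg Ho Hi. rewrite row_convolution_swap. apply csum_zero. intros k Hk.
  assert (Hne : (g2 - c0 - 2 * Z.of_nat k <> 0)%Z) by (intros E; apply Ho; exists (Z.of_nat k); lia).
  rewrite row_sum_vanish; [ring|lia|lia|lia|tauto].
Qed.
Open Scope R_scope.

(* In the variable t = arccos r the Chebyshev-Gauss-Lobatto nodes are
   t_i = i pi / (2M), i = 0 .. M, and T_g(r) = cos (g t).  With the trapezoidal weights
   w_i (1/2 at both ends, 1 inside) the cosines cos (g t), g <= 2M of fixed parity, are
   discretely orthogonal. *)
Definition tnode (M i : nat) : R := INR i * PI / (2 * INR M).
Definition tweight (M i : nat) : R := if Nat.eqb i 0 then / 2 else if Nat.eqb i M then / 2 else 1.
Definition tnorm (M k : nat) : R := if (Nat.eqb k 0 || Nat.eqb k (2 * M))%bool then INR M else INR M / 2.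

Lemma trapezoid_sum M X : (1 <= M)%nat ->
  rsum (S M) (fun i => tweight M i * X i) = / 2 * rsum M X + / 2 * rsum M (fun i => X (S i)).
Proof.
  intros HM. destruct M as [|M']; [lia|].
  rewrite rsum_S, rsum_shift, (rsum_S M' (fun i => X (S i))), (rsum_shift M' X).
  rewrite (rsum_ext M' (fun k => tweight (S M') (S k) * X (S k)) (fun k => X (S k))).
  - unfold tweight. simpl Nat.eqb. rewrite Nat.eqb_refl. lra.
  - intros k Hk. unfold tweight.
    destruct (Nat.eqb_spec (S k) 0), (Nat.eqb_spec (S k) (S M')); try lia. ring.
Qed.

Definition trap_cos M u := rsum (S M) (fun i => tweight M i * cos (IZR u * tnode M i)).

Lemma trap_cos_period M z : (1 <= M)%nat -> trap_cos M (4 * Z.of_nat M * z) = INR M.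
Proof.
  intros HM. assert (HP : 0 < INR M) by (apply lt_0_INR; lia). unfold trap_cos.
  rewrite (rsum_ext _ _ (fun i => tweight M i * 1)).
  - rewrite trapezoid_sum, !rsum_const by auto. lra.
  - intros i _. f_equal.
    replace (IZR (4 * Z.of_nat M * z) * tnode M i) with (2 * (IZR (z * Z.of_nat i) * PI)).
    + apply cos_2kPI.
    + unfold tnode. rewrite !mult_IZR, <- !INR_IZR_INZ. field. lra.
Qed.

Lemma trap_cos_vanish M u : (1 <= M)%nat -> Z.Even u ->
  sin (IZR u * PI / (4 * INR M)) <> 0 -> trap_cos M u = 0.
Proof.
  intros HM [v Hv] Hs. assert (HP : 0 < INR M) by (apply lt_0_INR; lia). unfold trap_cos.
  set (p := IZR u * PI / (4 * INR M)) in *.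
  rewrite trapezoid_sum by auto.
  rewrite (rsum_ext M _ (fun i => cos (0 + 2 * INR i * p)))
    by (intros; f_equal; unfold p, tnode; field; lra).
  rewrite (rsum_ext M (fun i => cos (IZR u * tnode M (S i))) (fun i => cos (2 * p + 2 * INR i * p)))
    by (intros; f_equal; unfold p, tnode; rewrite S_INR; field; lra).
  apply (Rmult_eq_reg_l (2 * sin p)); [|lra].
  transitivity (/ 2 * (2 * sin p * rsum M (fun i => cos (0 + 2 * INR i * p))) +
                / 2 * (2 * sin p * rsum M (fun i => cos (2 * p + 2 * INR i * p)))); [ring|].
  rewrite !sin_mul_cos_progression.
  replace (0 + (2 * INR M - 1) * p) with (2 * INR M * p - p) by ring.
  replace (2 * p + (2 * INR M - 1) * p) with (2 * INR M * p + p) by ring.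
  replace (0 - p) with (- p) by ring. replace (2 * p - p) with p by ring.
  rewrite sin_minus, sin_plus, sin_neg.
  replace (sin (2 * INR M * p)) with 0; [ring|].
  symmetry. apply sin_eq_0_1. exists v. unfold p. rewrite Hv, mult_IZR. field. lra.
Qed.

Lemma trapezoid_orthogonality M g k :
  (1 <= M)%nat -> (g <= 2 * M)%nat -> (k <= 2 * M)%nat -> Z.Even (Z.of_nat g - Z.of_nat k) ->
  rsum (S M) (fun i => tweight M i * (cos (INR g * tnode M i) * cos (INR k * tnode M i)))
  = if Nat.eqb g k then tnorm M k else 0.
Proof.
  intros HM Hg Hk He.
  assert (Hs : forall d, d <> 0%Z -> (Z.abs d < 4 * Z.of_nat M)%Z -> sin (IZR d * PI / (4 * INR M)) <> 0).
  { intros d Hd Hb. replace (4 * INR M) with (2 * INR (2 * M)) by (rewrite mult_INR; simpl; ring).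
    apply sin_frac_PI_neq0; lia. }
  rewrite (rsum_ext _ _ (fun i => / 2 * (tweight M i * cos (IZR (Z.of_nat g - Z.of_nat k) * tnode M i))
                                + / 2 * (tweight M i * cos (IZR (Z.of_nat g + Z.of_nat k) * tnode M i)))).
  2:{ intros i _. rewrite minus_IZR, plus_IZR, <- !INR_IZR_INZ.
      rewrite Rmult_minus_distr_r, Rmult_plus_distr_r, cos_minus, cos_plus. field. }
  rewrite rsum_plus, !rsum_scal.
  fold (trap_cos M (Z.of_nat g - Z.of_nat k)). fold (trap_cos M (Z.of_nat g + Z.of_nat k)).
  assert (Hev : Z.Even (Z.of_nat g + Z.of_nat k)) by (destruct He as [m Hm]; exists (m + Z.of_nat k)%Z; lia).
  destruct (Nat.eqb_spec g k) as [<-|Hne].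
  - replace (Z.of_nat g - Z.of_nat g)%Z with (4 * Z.of_nat M * 0)%Z by lia.
    rewrite trap_cos_period by auto. unfold tnorm.
    destruct (Nat.eqb_spec g 0) as [->|H0]; [|destruct (Nat.eqb_spec g (2 * M)) as [->|H1]]; simpl orb.
    + replace (Z.of_nat 0 + Z.of_nat 0)%Z with (4 * Z.of_nat M * 0)%Z by lia.
      rewrite trap_cos_period by auto. lra.
    + replace (Z.of_nat (2 * M) + Z.of_nat (2 * M))%Z with (4 * Z.of_nat M * 1)%Z by lia.
      rewrite trap_cos_period by auto. lra.
    + rewrite trap_cos_vanish; auto; [lra|]. apply Hs; lia.
  - rewrite trap_cos_vanish, (trap_cos_vanish M (Z.of_nat g + Z.of_nat k)); auto; [lra| |]; apply Hs; lia.
Qed.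

Definition rad_even M t s :=
  2 / INR M * rsum (S M) (fun k => tweight M k * (cos (INR (2 * k) * t) * cos (INR (2 * k) * s))).
Definition rad_odd M t s :=
  2 / INR M * rsum M (fun k => cos (INR (2 * k + 1) * t) * cos (INR (2 * k + 1) * s)).

Lemma rad_even_reproduces M g t : (1 <= M)%nat -> (g <= 2 * M)%nat -> Nat.Even g ->
  rsum (S M) (fun i => tweight M i * cos (INR g * tnode M i) * rad_even M t (tnode M i)) = cos (INR g * t).
Proof.
  intros HM Hg [m Hm]. assert (HP : 0 < INR M) by (apply lt_0_INR; lia). unfold rad_even.
  rewrite (rsum_ext _ _ (fun i => 2 / INR M * rsum (S M) (fun k => tweight M k * cos (INR (2 * k) * t) *
             (tweight M i * (cos (INR g * tnode M i) * cos (INR (2 * k) * tnode M i)))))).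
  2:{ intros i _. match goal with |- ?c * (?d * ?s) = _ => transitivity (d * (c * s)); [ring|] end.
      f_equal. rewrite <- rsum_scal. apply rsum_ext. intros; ring. }
  rewrite rsum_scal, rsum_swap.
  rewrite (rsum_ext _ _ (fun k => tweight M k * cos (INR (2 * k) * t) *
                                  (if Nat.eqb g (2 * k) then tnorm M (2 * k) else 0))).
  2:{ intros k Hk. rewrite rsum_scal, trapezoid_orthogonality; auto; [lia|].
      exists (Z.of_nat m - Z.of_nat k)%Z. lia. }
  rewrite (rsum_single _ _ m) by (lia || (intros k Hk Hne; destruct (Nat.eqb_spec g (2 * k)); [lia|ring])).
  subst g. rewrite Nat.eqb_refl. unfold tweight, tnorm.
  destruct (Nat.eqb_spec m 0) as [->|H0]; [simpl; field; lra|].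
  destruct (Nat.eqb_spec (2 * m) 0); [lia|].
  destruct (Nat.eqb_spec m M) as [->|H1]; rewrite ?Nat.eqb_refl.
  - simpl orb; cbv iota. field. lra.
  - destruct (Nat.eqb_spec (2 * m) (2 * M)); [lia|]. simpl orb; cbv iota. field. lra.
Qed.

Lemma rad_odd_reproduces M g t : (1 <= M)%nat -> (g <= 2 * M)%nat -> Nat.Odd g ->
  rsum (S M) (fun i => tweight M i * cos (INR g * tnode M i) * rad_odd M t (tnode M i)) = cos (INR g * t).
Proof.
  intros HM Hg [m Hm]. assert (HP : 0 < INR M) by (apply lt_0_INR; lia). unfold rad_odd.
  rewrite (rsum_ext _ _ (fun i => 2 / INR M * rsum M (fun k => cos (INR (2 * k + 1) * t) *
             (tweight M i * (cos (INR g * tnode M i) * cos (INR (2 * k + 1) * tnode M i)))))).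
  2:{ intros i _. match goal with |- ?c * (?d * ?s) = _ => transitivity (d * (c * s)); [ring|] end.
      f_equal. rewrite <- rsum_scal. apply rsum_ext. intros; ring. }
  rewrite rsum_scal, rsum_swap.
  rewrite (rsum_ext _ _ (fun k => cos (INR (2 * k + 1) * t) *
                                  (if Nat.eqb g (2 * k + 1) then tnorm M (2 * k + 1) else 0))).
  2:{ intros k Hk. rewrite rsum_scal, trapezoid_orthogonality; auto; [lia|].
      exists (Z.of_nat m - Z.of_nat k)%Z. lia. }
  rewrite (rsum_single _ _ m) by (lia || (intros k Hk Hne; destruct (Nat.eqb_spec g (2 * k + 1)); [lia|ring])).
  subst g. rewrite Nat.eqb_refl. unfold tnorm.
  destruct (Nat.eqb_spec (2 * m + 1) 0), (Nat.eqb_spec (2 * m + 1) (2 * M)); try lia.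
  simpl orb; cbv iota. field. lra.
Qed.

Lemma cos_odd_last_node M g : (1 <= M)%nat -> Nat.Odd g -> cos (INR g * tnode M M) = 0.
Proof.
  intros HM [m ->].
  replace (INR (2 * m + 1) * tnode M M) with (IZR (Z.of_nat m) * PI + PI / 2).
  - rewrite cos_plus, cos_PI2, sin_PI2, sin_eq_0_1 by eauto. ring.
  - unfold tnode. rewrite <- INR_IZR_INZ, plus_INR, mult_INR. simpl. field. apply not_0_INR. lia.
Qed.

Lemma rad_odd_last_node M t : (1 <= M)%nat -> rad_odd M t (tnode M M) = 0.
Proof.
  intros HM. unfold rad_odd. rewrite rsum_zero; [ring|].
  intros k _. rewrite cos_odd_last_node by (auto; exists k; lia). ring.
Qed.

(* The fundamental function of the node (t_{i1}, theta_{i1,j}): the product structure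
   "radial kernel x angular kernel", split by parity, since frequencies (g1, g2) in
   Gamma_sq have g1 = g2 mod 2.  freq_even0 / freq_odd0 are the smallest even / odd
   frequencies above -N, so the two angular kernels together cover -N < g2 <= N. *)
Definition node_weight (N i1 : nat) : R := if Nat.eqb i1 0 then / (4 * INR N) else / (2 * INR N).
Definition freq_even0 (N : nat) : Z := (2 - Z.of_nat N - Z.of_nat (N mod 2))%Z.
Definition freq_odd0 (N : nat) : Z := (1 - Z.of_nat N + Z.of_nat (N mod 2))%Z.

Definition node_kernel M N i1 j t th : C :=
  Cmult (RtoC (node_weight N i1))
    (Cplus (Cmult (RtoC (rad_even M t (tnode M i1))) (ang_kernel N (freq_even0 N) (th - row_angle N i1 j)))
           (Cmult (RtoC (rad_odd M t (tnode M i1))) (ang_kernel N (freq_odd0 N) (th - row_angle N i1 j)))).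

Lemma div2_decomp N : (Z.of_nat N = 2 * Z.of_nat (N / 2) + Z.of_nat (N mod 2) /\ Z.of_nat (N mod 2) < 2)%Z.
Proof. pose proof (Nat.div_mod N 2 ltac:(lia)). pose proof (Nat.mod_upper_bound N 2 ltac:(lia)). lia. Qed.

Lemma freq_even0_range N : (- Z.of_nat N < freq_even0 N <= 2 - Z.of_nat N)%Z.
Proof. unfold freq_even0. pose proof (div2_decomp N). lia. Qed.

Lemma freq_odd0_range N : (- Z.of_nat N < freq_odd0 N <= 2 - Z.of_nat N)%Z.
Proof. unfold freq_odd0. pose proof (div2_decomp N). lia. Qed.

Lemma node_weight_row_len M N i1 : (1 <= M)%nat -> (1 <= N)%nat -> (i1 <= M)%nat ->
  node_weight N i1 * INR (row_len M N i1) = tweight M i1.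
Proof.
  intros HM HN Hi. assert (0 < INR N) by (apply lt_0_INR; lia). unfold node_weight, row_len, tweight.
  destruct (Nat.eqb_spec i1 0) as [->|H0].
  - destruct (Nat.eqb_spec 0 M); [lia|]. rewrite mult_INR. simpl. field. lra.
  - destruct (Nat.eqb_spec i1 M); [field; lra|]. rewrite mult_INR. simpl. field. lra.
Qed.

Open Scope C_scope.

Lemma row_kernel_expand M N i1 g1 g2 t th :
  csum (row_len M N i1) (fun j => RtoC (cos (INR g1 * tnode M i1)) * cis (IZR g2 * row_angle N i1 j)
                                  * node_kernel M N i1 j t th) =
  RtoC (cos (INR g1 * tnode M i1) * node_weight N i1) *
   (RtoC (rad_even M t (tnode M i1)) *
      csum (row_len M N i1) (fun j => cis (IZR g2 * row_angle N i1 j) * ang_kernel N (freq_even0 N) (th - row_angle N i1 j)) +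
    RtoC (rad_odd M t (tnode M i1)) *
      csum (row_len M N i1) (fun j => cis (IZR g2 * row_angle N i1 j) * ang_kernel N (freq_odd0 N) (th - row_angle N i1 j))).
Proof.
  rewrite <- !csum_scal, <- csum_plus, <- csum_scal. apply csum_ext. intros j _.
  unfold node_kernel. rewrite RtoC_mult. ring.
Qed.

Lemma node_kernel_reproduces M N g1 g2 t th :
  (1 <= M)%nat -> (1 <= N)%nat -> (g1 <= 2 * M)%nat ->
  (- Z.of_nat N < g2 <= Z.of_nat N)%Z -> Z.even (Z.of_nat g1 + g2) = true ->
  csum (S M) (fun i1 => csum (row_len M N i1) (fun j =>
     RtoC (cos (INR g1 * tnode M i1)) * cis (IZR g2 * row_angle N i1 j) * node_kernel M N i1 j t th))
  = RtoC (cos (INR g1 * t)) * cis (IZR g2 * th).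
Proof.
  intros HM HN Hg1 Hg2 Hev. apply Z.even_spec in Hev. destruct Hev as [s Hs].
  pose proof (div2_decomp N). pose proof (freq_even0_range N). pose proof (freq_odd0_range N).
  destruct (Nat.Even_or_Odd g1) as [[m Hm]|[m Hm]].
  - (* even g1: only the even angular kernel matches, and the odd radial term dies on row M *)
    assert (He : Z.Even (g2 - freq_even0 N))
      by (exists (s - Z.of_nat m - 1 + Z.of_nat (N / 2) + Z.of_nat (N mod 2))%Z; unfold freq_even0; lia).
    assert (Ho : ~ Z.Even (g2 - freq_odd0 N)) by (intros [x Hx]; unfold freq_odd0 in Hx; lia).
    rewrite (csum_ext _ _ (fun i1 => RtoC (tweight M i1 * cos (INR g1 * tnode M i1) * rad_even M t (tnode M i1))
                                     * cis (IZR g2 * th))).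
    + rewrite csum_scal_r, csum_RtoC, rad_even_reproduces; auto. exists m; auto.
    + intros i1 Hi1. rewrite row_kernel_expand, row_convolution_match by auto.
      rewrite <- (node_weight_row_len M N i1) by lia. rewrite !RtoC_mult.
      destruct (Nat.eq_dec i1 M) as [->|Hne].
      * rewrite rad_odd_last_node by auto. ring.
      * rewrite row_convolution_mismatch by auto. ring.
  - (* odd g1: symmetric, and cos (g1 t_M) = 0 kills row M *)
    assert (Ho : Z.Even (g2 - freq_odd0 N))
      by (exists (s - Z.of_nat m - 1 + Z.of_nat (N / 2))%Z; unfold freq_odd0; lia).
    assert (He : ~ Z.Even (g2 - freq_even0 N)) by (intros [x Hx]; unfold freq_even0 in Hx; lia).
    rewrite (csum_ext _ _ (fun i1 => RtoC (tweight M i1 * cos (INR g1 * tnode M i1) * rad_odd M t (tnode M i1))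
                                     * cis (IZR g2 * th))).
    + rewrite csum_scal_r, csum_RtoC, rad_odd_reproduces; auto. exists m; auto.
    + intros i1 Hi1. rewrite row_kernel_expand.
      destruct (Nat.eq_dec i1 M) as [->|Hne].
      * rewrite cos_odd_last_node by (auto; exists m; auto). rewrite Rmult_0_r, !Rmult_0_l. ring.
      * rewrite row_convolution_mismatch, row_convolution_match by auto.
        rewrite <- (node_weight_row_len M N i1) by lia. rewrite !RtoC_mult. ring.
Qed.
Open Scope R_scope.

(* Each one-dimensional kernel is dominated by the
   envelope, and the radial and angular node sets are equispaced, so env_sum_le applies
   in each variable separately. *)
Lemma ang_kernel_bound N c0 p : Cmod (ang_kernel N c0 p) <= env N p.
Proof. apply env_ge; [apply cis_progression_count|intros _; apply cis_progression_sin_bound]. Qed.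

Lemma row_lebesgue_sum M N i1 c0 th : (1 <= N)%nat ->
  rsum (row_len M N i1) (fun j => Cmod (ang_kernel N c0 (th - row_angle N i1 j)))
  <= 2 * (INR N * (8 + 4 * ln (INR N))).
Proof.
  intros HN. assert (0 < INR N) by (apply lt_0_INR; lia).
  set (a := IZR (row_offset N i1) * PI / (2 * INR N) - th).
  eapply Rle_trans; [apply rsum_le; intros j _; apply ang_kernel_bound|].
  rewrite (rsum_ext _ (fun j => env N (th - row_angle N i1 j)) (fun j => env N (a + INR j * PI / INR N))).
  - eapply Rle_trans; [apply rsum_mono with (m := (2 * N)%nat)|apply env_sum_two_periods; auto].
    + unfold row_len; destruct (Nat.eqb i1 M); lia.
    + intros; apply env_nonneg.
  - intros j _. rewrite <- env_opp. f_equal.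
    unfold a, row_angle, row_index. rewrite plus_IZR, mult_IZR, <- INR_IZR_INZ. field. lra.
Qed.

Definition dir_even M y := rsum (S M) (fun k => tweight M k * cos (INR (2 * k) * y)).
Definition dir_odd M y := rsum M (fun k => cos (INR (2 * k + 1) * y)).

Lemma dir_even_bound M y : (1 <= M)%nat -> Rabs (dir_even M y) <= env (2 * M) y.
Proof.
  intros HM. unfold dir_even. rewrite trapezoid_sum by auto.
  rewrite (rsum_ext M (fun k => cos (INR (2 * k) * y)) (fun k => cos (0 + 2 * INR k * y)))
    by (intros; f_equal; rewrite mult_INR; change (INR 2) with 2; ring).
  rewrite (rsum_ext M (fun k => cos (INR (2 * S k) * y)) (fun k => cos (2 * y + 2 * INR k * y)))
    by (intros; f_equal; rewrite mult_INR, (S_INR k); change (INR 2) with 2; ring).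
  pose proof (cos_progression_count 0 y M). pose proof (cos_progression_count (2 * y) y M).
  pose proof (cos_progression_sin_bound 0 y M). pose proof (cos_progression_sin_bound (2 * y) y M).
  set (A := rsum M (fun k => cos (0 + 2 * INR k * y))) in *.
  set (B := rsum M (fun k => cos (2 * y + 2 * INR k * y))) in *.
  assert (Htri : Rabs (/ 2 * A + / 2 * B) <= / 2 * Rabs A + / 2 * Rabs B).
  { eapply Rle_trans; [apply Rabs_triang|]. rewrite !Rabs_mult, Rabs_right by lra. lra. }
  apply env_ge.
  - rewrite mult_INR. change (INR 2) with 2. pose proof (pos_INR M). lra.
  - intros _. pose proof (Rabs_pos (sin y)). nra.
Qed.

Lemma dir_odd_bound M y : Rabs (dir_odd M y) <= env (2 * M) y.
Proof.
  unfold dir_odd.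
  rewrite (rsum_ext M _ (fun k => cos (y + 2 * INR k * y)))
    by (intros; f_equal; rewrite plus_INR, mult_INR; change (INR 2) with 2; change (INR 1) with 1; ring).
  apply env_ge.
  - eapply Rle_trans; [apply cos_progression_count|apply le_INR; lia].
  - intros _. apply cos_progression_sin_bound.
Qed.

Lemma rad_even_expand M t s : (1 <= M)%nat -> rad_even M t s = / INR M * (dir_even M (t - s) + dir_even M (t + s)).
Proof.
  intros HM. assert (0 < INR M) by (apply lt_0_INR; lia). unfold rad_even, dir_even.
  rewrite <- rsum_plus, <- rsum_scal, <- rsum_scal. apply rsum_ext. intros k _.
  rewrite (Rmult_minus_distr_l _ t s), (Rmult_plus_distr_l _ t s), cos_minus, cos_plus. field. lra.
Qed.

Lemma rad_odd_expand M t s : (1 <= M)%nat -> rad_odd M t s = / INR M * (dir_odd M (t - s) + dir_odd M (t + s)).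
Proof.
  intros HM. assert (0 < INR M) by (apply lt_0_INR; lia). unfold rad_odd, dir_odd.
  rewrite <- rsum_plus, <- rsum_scal, <- rsum_scal. apply rsum_ext. intros k _.
  rewrite (Rmult_minus_distr_l _ t s), (Rmult_plus_distr_l _ t s), cos_minus, cos_plus. field. lra.
Qed.

(* The M+1 radial nodes are part of 2M equispaced points of step pi/(2M). *)
Lemma radial_env_sum M t (G : R -> R) : (1 <= M)%nat -> (forall y, 0 <= G y <= env (2 * M) y) ->
  rsum (S M) (fun i => G (t + tnode M i)) <= 2 * INR M * (8 + 4 * ln (INR (2 * M))).
Proof.
  intros HM HG.
  apply Rle_trans with (rsum (2 * M) (fun i => env (2 * M) (t + INR i * PI / INR (2 * M)))).
  - eapply Rle_trans; [apply rsum_le; intros i _; apply HG|].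
    rewrite (rsum_ext _ (fun i => env (2 * M) (t + tnode M i))
                        (fun i => env (2 * M) (t + INR i * PI / INR (2 * M))))
      by (intros; unfold tnode; rewrite mult_INR; auto).
    apply rsum_mono; [lia|intros; apply env_nonneg].
  - pose proof (env_sum_le (2 * M) t ltac:(lia)). unfold env_sum in *.
    rewrite mult_INR in *. simpl INR in *. lra.
Qed.

Lemma radial_lebesgue_sum M t (K : R -> R -> R) (D : R -> R) : (1 <= M)%nat ->
  (forall y, Rabs (D y) <= env (2 * M) y) ->
  (forall s, K t s = / INR M * (D (t - s) + D (t + s))) ->
  rsum (S M) (fun i => Rabs (K t (tnode M i))) <= 4 * (8 + 4 * ln (INR (2 * M))).
Proof.
  intros HM HD HK. assert (0 < INR M) by (apply lt_0_INR; lia).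
  assert (H1 : rsum (S M) (fun i => Rabs (D (t - tnode M i))) <= 2 * INR M * (8 + 4 * ln (INR (2 * M)))).
  { rewrite (rsum_ext _ _ (fun i => Rabs (D (- (- t + tnode M i))))) by (intros; do 2 f_equal; ring).
    apply (radial_env_sum M (- t) (fun y => Rabs (D (- y)))); auto.
    intros y. rewrite <- (env_opp _ y). split; [apply Rabs_pos|apply HD]. }
  assert (H2 : rsum (S M) (fun i => Rabs (D (t + tnode M i))) <= 2 * INR M * (8 + 4 * ln (INR (2 * M)))).
  { apply (radial_env_sum M t (fun y => Rabs (D y))); auto. intros y. split; [apply Rabs_pos|apply HD]. }
  eapply Rle_trans.
  { apply rsum_le. intros i _. rewrite HK, Rabs_mult, Rabs_right by (left; apply Rinv_0_lt_compat; lra).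
    apply Rmult_le_compat_l; [left; apply Rinv_0_lt_compat; lra|apply Rabs_triang]. }
  rewrite rsum_scal, rsum_plus.
  apply (Rmult_le_reg_l (INR M)); auto. rewrite <- Rmult_assoc, Rinv_r by lra. lra.
Qed.

Lemma node_kernel_bound M N i1 j t th : (1 <= N)%nat ->
  Cmod (node_kernel M N i1 j t th) <=
  / (2 * INR N) * (Rabs (rad_even M t (tnode M i1)) * Cmod (ang_kernel N (freq_even0 N) (th - row_angle N i1 j))
                 + Rabs (rad_odd M t (tnode M i1)) * Cmod (ang_kernel N (freq_odd0 N) (th - row_angle N i1 j))).
Proof.
  intros HN. assert (0 < INR N) by (apply lt_0_INR; lia).
  unfold node_kernel. rewrite Cmod_mult, Cmod_R.
  assert (Hc : Rabs (node_weight N i1) <= / (2 * INR N)).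
  { unfold node_weight. destruct (Nat.eqb i1 0); rewrite Rabs_right.
    - apply Rinv_le_contravar; lra.
    - left; apply Rinv_0_lt_compat; lra.
    - lra.
    - left; apply Rinv_0_lt_compat; lra. }
  apply Rmult_le_compat; [apply Rabs_pos|apply Cmod_ge_0|auto|].
  eapply Rle_trans; [apply Cmod_triangle|]. rewrite !Cmod_mult, !Cmod_R. lra.
Qed.

Lemma lebesgue_function_bound M N t th : (1 <= M)%nat -> (1 <= N)%nat ->
  rsum (S M) (fun i1 => rsum (row_len M N i1) (fun j => Cmod (node_kernel M N i1 j t th))) <=
  8 * (8 + 4 * ln (INR N)) * (8 + 4 * ln (INR (2 * M))).
Proof.
  intros HM HN. assert (0 < INR N) by (apply lt_0_INR; lia).
  assert (HlN : 0 <= ln (INR N)) by (rewrite <- ln_1; apply ln_le; [lra|apply (le_INR 1); auto]).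
  set (B := 8 + 4 * ln (INR N)).
  assert (Hrow : forall i1, rsum (row_len M N i1) (fun j => Cmod (node_kernel M N i1 j t th))
                            <= B * (Rabs (rad_even M t (tnode M i1)) + Rabs (rad_odd M t (tnode M i1)))).
  { intros i1. eapply Rle_trans; [apply rsum_le; intros j _; apply node_kernel_bound; auto|].
    rewrite rsum_scal, rsum_plus, !rsum_scal.
    pose proof (row_lebesgue_sum M N i1 (freq_even0 N) th HN).
    pose proof (row_lebesgue_sum M N i1 (freq_odd0 N) th HN).
    pose proof (Rabs_pos (rad_even M t (tnode M i1))). pose proof (Rabs_pos (rad_odd M t (tnode M i1))).
    apply Rle_trans with (/ (2 * INR N) * (Rabs (rad_even M t (tnode M i1)) * (2 * (INR N * B))
                                          + Rabs (rad_odd M t (tnode M i1)) * (2 * (INR N * B)))).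
    - apply Rmult_le_compat_l; [left; apply Rinv_0_lt_compat; lra|].
      apply Rplus_le_compat; apply Rmult_le_compat_l; auto.
    - right. field. lra. }
  eapply Rle_trans; [apply rsum_le; intros i1 _; apply Hrow|].
  rewrite rsum_scal, rsum_plus.
  pose proof (radial_lebesgue_sum M t (rad_even M) (dir_even M) HM
                (fun y => dir_even_bound M y HM) (fun s => rad_even_expand M t s HM)).
  pose proof (radial_lebesgue_sum M t (rad_odd M) (dir_odd M) HM
                (dir_odd_bound M) (fun s => rad_odd_expand M t s HM)).
  assert (0 <= B) by (unfold B; lra). nra.
Qed.

Definition coef (a b : nat -> Z -> R) (g : nat * Z) : C := (a (fst g) (snd g), b (fst g) (snd g)).
Definition Qpoly M N a b t th : C :=
  csumL (Gamma_sq M N) (fun g => Cmult (coef a b g) (Cmult (RtoC (cos (INR (fst g) * t))) (cis (IZR (snd g) * th)))).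

Lemma Psq_as_Qpoly M N a b r th :
  (Psq_re M N a b r th, Psq_im M N a b r th) = Qpoly M N a b (acos r) th.
Proof.
  unfold Psq_re, Psq_im, Qpoly, sumL, csumL. induction (Gamma_sq M N) as [|g l IH]; simpl; [reflexivity|].
  rewrite <- IH. unfold coef, chebT, cis, RtoC, Cmult, Cplus; simpl. f_equal; ring.
Qed.

Lemma cmod_Cmod x y : cmod x y = Cmod (x, y).
Proof. unfold cmod, Cmod; simpl. f_equal; ring. Qed.

Lemma Gamma_sq_mem M N g : In g (Gamma_sq M N) ->
  (fst g <= 2 * M)%nat /\ (- Z.of_nat N < snd g <= Z.of_nat N)%Z /\ Z.even (Z.of_nat (fst g) + snd g) = true.
Proof.
  unfold Gamma_sq. rewrite filter_In. destruct g as [g1 g2]. rewrite in_prod_iff, in_seq, in_map_iff.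
  intros [[H1 [k [Hk Hk']]] He]. apply in_seq in Hk'. simpl in *. repeat split; try lia; auto.
Qed.

Lemma Qpoly_interpolation M N a b t th : (1 <= M)%nat -> (1 <= N)%nat ->
  Qpoly M N a b t th = csum (S M) (fun i1 => csum (row_len M N i1) (fun j =>
     Cmult (Qpoly M N a b (tnode M i1) (row_angle N i1 j)) (node_kernel M N i1 j t th))).
Proof.
  intros HM HN. unfold Qpoly at 1.
  rewrite (csumL_ext _ _ (fun g => csum (S M) (fun i1 => csum (row_len M N i1) (fun j =>
     Cmult (Cmult (coef a b g) (Cmult (RtoC (cos (INR (fst g) * tnode M i1))) (cis (IZR (snd g) * row_angle N i1 j))))
           (node_kernel M N i1 j t th))))).
  - rewrite csumL_swap. apply csum_ext. intros i1 _. rewrite csumL_swap. apply csum_ext. intros j _.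
    unfold Qpoly. rewrite <- csumL_scal_r. auto.
  - intros g Hg. apply Gamma_sq_mem in Hg. destruct Hg as (H1 & H2 & H3).
    rewrite <- (node_kernel_reproduces M N (fst g) (snd g) t th) by auto.
    rewrite <- csum_scal. apply csum_ext. intros i1 _.
    rewrite <- csum_scal. apply csum_ext. intros j _. ring.
Qed.

Lemma Qpoly_le_lebesgue M N a b t th : (1 <= M)%nat -> (1 <= N)%nat ->
  (forall i1 j, (i1 <= M)%nat -> (j < row_len M N i1)%nat ->
     Cmod (Qpoly M N a b (tnode M i1) (row_angle N i1 j)) <= 1) ->
  Cmod (Qpoly M N a b t th) <=
  rsum (S M) (fun i1 => rsum (row_len M N i1) (fun j => Cmod (node_kernel M N i1 j t th))).
Proof.
  intros HM HN Hnode. rewrite Qpoly_interpolation by auto.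
  eapply Rle_trans; [apply Cmod_csum|]. apply rsum_le. intros i1 Hi1.
  eapply Rle_trans; [apply Cmod_csum|]. apply rsum_le. intros j Hj. rewrite Cmod_mult.
  specialize (Hnode i1 j ltac:(lia) Hj).
  pose proof (Cmod_ge_0 (node_kernel M N i1 j t th)).
  pose proof (Cmod_ge_0 (Qpoly M N a b (tnode M i1) (row_angle N i1 j))). nra.
Qed.

Lemma tnode_range M i1 : (1 <= M)%nat -> (i1 <= M)%nat -> 0 <= tnode M i1 <= PI / 2.
Proof.
  intros HM Hi. unfold tnode.
  pose proof PI_RGT_0. assert (0 < INR M) by (apply lt_0_INR; lia).
  assert (INR i1 <= INR M) by (apply le_INR; lia). pose proof (pos_INR i1). split.
  - apply Rmult_le_pos; [apply Rmult_le_pos; lra|left; apply Rinv_0_lt_compat; lra].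
  - apply Rle_trans with (INR M * PI / (2 * INR M)); [|right; field; lra].
    unfold Rdiv. apply Rmult_le_compat_r; [left; apply Rinv_0_lt_compat; lra|nra].
Qed.

Lemma tnode_acos M i1 : (1 <= M)%nat -> (i1 <= M)%nat -> acos (rnode M i1) = tnode M i1.
Proof.
  intros HM Hi. pose proof (tnode_range M i1 HM Hi). pose proof PI_RGT_0.
  apply acos_cos. lra.
Qed.

Lemma grid_in_Im M N i1 j : (1 <= N)%nat -> (i1 <= M)%nat -> (j < row_len M N i1)%nat ->
  in_Im M N i1 (row_index N i1 j).
Proof.
  intros HN Hi Hj. unfold in_Im, row_index, row_offset.
  pose proof (Nat.div_mod i1 2 ltac:(lia)). pose proof (Nat.mod_upper_bound i1 2 ltac:(lia)).
  assert (Hev : Z.even (Z.of_nat i1 + (2 * Z.of_nat j + (2 - Z.of_nat (i1 mod 2) - 2 * Z.of_nat N))) = true).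
  { apply Z.even_spec. exists (Z.of_nat (i1 / 2) + Z.of_nat j + 1 - Z.of_nat N)%Z. lia. }
  unfold row_len in Hj. destruct (Nat.eqb_spec i1 M); repeat split; auto; lia.
Qed.

Lemma grid_in_dom M N i1 j : (1 <= M)%nat -> (1 <= N)%nat -> (i1 <= M)%nat -> (j < row_len M N i1)%nat ->
  in_dom (rnode M i1) (thnode N (row_index N i1 j)).
Proof.
  intros HM HN Hi Hj. assert (0 < INR N) by (apply lt_0_INR; lia). pose proof PI_RGT_0.
  assert (Hb : (- 2 * Z.of_nat N <= row_index N i1 j <= 2 * Z.of_nat N)%Z).
  { unfold row_index, row_offset, row_len in *. pose proof (Nat.mod_upper_bound i1 2 ltac:(lia)).
    destruct (Nat.eqb i1 M); lia. }
  split.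
  - change (rnode M i1) with (cos (tnode M i1)). pose proof (tnode_range M i1 HM Hi).
    split; [apply cos_ge_0; lra|apply COS_bound].
  - unfold thnode. destruct Hb as [Hb1 Hb2]. apply IZR_le in Hb1. apply IZR_le in Hb2.
    rewrite mult_IZR, <- INR_IZR_INZ in Hb1, Hb2.
    split; apply (Rmult_le_reg_r (2 * INR N)); try lra; unfold Rdiv; rewrite Rmult_assoc, Rinv_l by lra; nra.
Qed.

Lemma Qpoly_grid_bound M N (fre fim : R -> R -> R) a b i1 j :
  (1 <= M)%nat -> (1 <= N)%nat -> (i1 <= M)%nat -> (j < row_len M N i1)%nat ->
  (forall r th, in_dom r th -> cmod (fre r th) (fim r th) <= 1) ->
  (forall (i1 : nat) (i2 : Z), in_Im M N i1 i2 ->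
     Psq_re M N a b (rnode M i1) (thnode N i2) = fre (rnode M i1) (thnode N i2) /\
     Psq_im M N a b (rnode M i1) (thnode N i2) = fim (rnode M i1) (thnode N i2)) ->
  Cmod (Qpoly M N a b (tnode M i1) (row_angle N i1 j)) <= 1.
Proof.
  intros HM HN Hi Hj Hbd Hint.
  rewrite <- tnode_acos, <- Psq_as_Qpoly by auto. unfold row_angle. fold (thnode N (row_index N i1 j)).
  destruct (Hint i1 (row_index N i1 j)) as [E1 E2]; [apply grid_in_Im; auto|].
  rewrite E1, E2, <- cmod_Cmod. apply Hbd, grid_in_dom; auto.
Qed.

Lemma log_product_bound M N : (1 <= M)%nat -> (1 <= N)%nat ->
  8 * (8 + 4 * ln (INR N)) * (8 + 4 * ln (INR (2 * M))) <= 3840 * ln (INR M + 1) * ln (INR N + 1).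
Proof.
  intros HM HN. assert (1 <= INR M) by (apply (le_INR 1); auto). assert (1 <= INR N) by (apply (le_INR 1); auto).
  assert (Hl2 : / 2 <= ln 2) by (pose proof (ln_ge_1_minus_inv 2 ltac:(lra)); lra).
  assert (HN1 : ln 2 <= ln (INR N + 1)) by (apply ln_le; lra).
  assert (HM1 : ln 2 <= ln (INR M + 1)) by (apply ln_le; lra).
  assert (HN3 : ln (INR N) <= ln (INR N + 1)) by (apply ln_le; lra).
  assert (HM2 : 0 <= ln (INR (2 * M))) by (rewrite <- ln_1; apply ln_le; [lra|rewrite mult_INR; simpl; lra]).
  assert (HM3 : ln (INR (2 * M)) <= ln 2 + ln (INR M + 1)).
  { rewrite <- ln_mult by lra. apply ln_le; rewrite mult_INR; simpl; lra. }
  assert (A1 : 8 + 4 * ln (INR N) <= 20 * ln (INR N + 1)) by lra.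
  assert (A2 : 8 + 4 * ln (INR (2 * M)) <= 24 * ln (INR M + 1)) by lra.
  assert (HN2 : 0 <= ln (INR N)) by (rewrite <- ln_1; apply ln_le; lra).
  replace (3840 * ln (INR M + 1) * ln (INR N + 1)) with (8 * (20 * ln (INR N + 1)) * (24 * ln (INR M + 1))) by ring.
  apply Rmult_le_compat; lra.
Qed.

Theorem theorem8p2 :
  exists C : R, 0 < C /\
  forall (m1 m2 : nat), (1 <= m1)%nat -> (1 <= m2)%nat ->
  forall (fre fim : R -> R -> R),
    in_CD fre -> in_CD fim ->
    (forall r th, in_dom r th -> cmod (fre r th) (fim r th) <= 1) ->
  forall (a b : nat -> Z -> R),
    (forall (i1 : nat) (i2 : Z), in_Im m1 m2 i1 i2 ->
       Psq_re m1 m2 a b (rnode m1 i1) (thnode m2 i2) = fre (rnode m1 i1) (thnode m2 i2) /\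
       Psq_im m1 m2 a b (rnode m1 i1) (thnode m2 i2) = fim (rnode m1 i1) (thnode m2 i2)) ->
  forall r th, in_dom r th ->
    cmod (Psq_re m1 m2 a b r th) (Psq_im m1 m2 a b r th)
      <= C * ln (INR m1 + 1) * ln (INR m2 + 1).
Proof.
  exists 3840. split; [lra|].
  intros M N HM HN fre fim _ _ Hbd a b Hint r th _.
  rewrite cmod_Cmod, Psq_as_Qpoly.
  eapply Rle_trans; [apply Qpoly_le_lebesgue; auto|].
  - intros i1 j Hi Hj. apply (Qpoly_grid_bound M N fre fim); auto.
  - eapply Rle_trans; [apply lebesgue_function_bound|apply log_product_bound]; auto.
Qed.
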